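(* For any integers $n, d \geq 2$ with $\gcd(d,n) = 1$, we have $\max S_{d,n} = nd - n - d$.
   Context: For integers $d,n \geq 2$ with $\gcd(n,d)=1$, let $n^\ast \in \{1,\dots,d-1\}$ be the unique integer with $n^\ast \equiv -n \pmod d$, and define $S_{d,n} = \{ n^\ast + jd : j \in \mathbb{Z}_{\geq 0},\ n^\ast + jd < n(d-1)\}$. *)

From Stdlib Require Import ZArith.
Open Scope Z_scope.

(* n^* : the representative of -n mod d in {0,..,d-1}; equals the unique
   element of {1,..,d-1} congruent to -n when gcd(n,d)=1 and d >= 2. *)
Definition nstar (d n : Z) : Z := Z.modulo (- n) d.

Definition S_dn (d n : Z) (x : Z) : Prop :=
  exists j : Z, 0 <= j /\ x = nstar d n + j * d /\ x < n * (d - 1).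

Definition is_max (P : Z -> Prop) (m : Z) : Prop :=
  P m /\ forall x, P x -> x <= m.

From Stdlib Require Import ZArith Lia.
Open Scope Z_scope.

(* Since n^* = ceil(n/d) d - n, the set S_{d,n} is the arithmetic progression
   { k d - n : ceil(n/d) <= k < n }, whose largest element is (n - 1) d - n; it is
   nonempty because ceil(n/d) <= n - 1 when n, d >= 2. *)

Section ShiftedMultiples.

Variables d n : Z.
Hypothesis d_pos : 0 < d.

(* [- (- n / d)] is the ceiling of [n / d]. *)
Lemma nstar_eq_ceil_mul_sub : nstar d n = - (- n / d) * d - n.
Proof.
  unfold nstar; rewrite Z.mod_eq by lia; lia.
Qed.

Lemma S_dn_iff_shifted_multiple (x : Z) :
  S_dn d n x <-> exists k, - (- n / d) <= k < n /\ x = k * d - n.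
Proof.
  unfold S_dn; rewrite nstar_eq_ceil_mul_sub.
  split.
  - intros [j [j_ge0 [-> x_lt]]].
    exists (j - (- n / d)); split; [split|]; [lia | | lia].
    apply (Z.mul_lt_mono_pos_r d); lia.
  - intros [k [[k_ge k_lt] ->]].
    exists (k + (- n / d)); split; [lia | split; [lia|]].
    assert (k * d < n * d) by (apply Z.mul_lt_mono_pos_r; lia).
    lia.
Qed.

End ShiftedMultiples.

Lemma ceil_div_le_pred (n d : Z) : 2 <= n -> 2 <= d -> - (- n / d) <= n - 1.
Proof.
  intros hn hd.
  assert (1 - n <= - n / d) by (apply Z.div_le_lower_bound; nia).
  lia.
Qed.

Theorem lemma3p3 (n d : Z) (hn : 2 <= n) (hd : 2 <= d) (hg : Z.gcd d n = 1) :
  is_max (S_dn d n) (n * d - n - d).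
Proof.
  split.
  - apply S_dn_iff_shifted_multiple; [lia|].
    pose proof (ceil_div_le_pred n d hn hd).
    exists (n - 1); split; lia.
  - intros x Sx.
    apply S_dn_iff_shifted_multiple in Sx as [k [[_ k_lt] ->]]; [|lia].
    nia.
Qed.
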